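(* Let $n,N\in\mathbb N$, $I=\{1,\dots,n\}$, $J=\{1,\dots,N\}$, $a=(a_{ij})\in\mathbb R^{n\times N}$, and $1\le p<\infty$. Let $G$ be a nonempty finite set of maps from $I$ to $J$ and $C_G>0$ a constant depending only on $G$ such that for all $i\in I$, $j\in J$ and all pairs $(i_1,j_1)\ne(i_2,j_2)$ in $I\times J$: (i) $\mathbb P(\{g\in G: g(i)=j\})=1/N$; (ii) $\mathbb P(\{g\in G: g(i_1)=j_1,\ g(i_2)=j_2\})\le C_G/N^2$. Then $$C\Big[\frac1N\sum_{k=1}^N s(k)+\Big(\frac1N\sum_{k=N+1}^{nN}s(k)^p\Big)^{1/p}\Big]\le \mathbb E\Big(\sum_{i=1}^n|a_{ig(i)}|^p\Big)^{1/p}\le \frac1N\sum_{k=1}^N s(k)+\Big(\frac1N\sum_{k=N+1}^{nN}s(k)^p\Big)^{1/p},$$ where $C>0$ is a constant depending only on $C_G$.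
   Context: $\mathbb P$ denotes the normalized counting measure on $G$, i.e. $\mathbb P(E)=|E|/|G|$, and $\mathbb E$ the expectation with respect to $\mathbb P$ (over $g\in G$). $(s(k))_{k=1}^{nN}$ is the non-increasing rearrangement of the $nN$ numbers $(|a_{ij}|)_{i\in I,j\in J}$. *)

From mathcomp Require Import all_boot.
From Stdlib Require Import Reals.
Set Implicit Arguments. Unset Strict Implicit. Unset Printing Implicit Defensive.

Local Open Scope R_scope.

(* x ^ y for real y and x >= 0, with the convention 0 ^ y = 0 (y > 0).
   (Stdlib's Rpower 0 y is exp (y * ln 0) = 1, hence the wrapper.) *)
Definition rpow (x y : R) : R := if Rle_dec x 0 then 0 else Rpower x y.

Definition Prob (n N : nat) (G : {set {ffun 'I_n -> 'I_N}})
  (E : pred {ffun 'I_n -> 'I_N}) : R :=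
  INR #|[set g in G | E g]| / INR #|G|.

Definition Expect (n N : nat) (G : {set {ffun 'I_n -> 'I_N}})
  (f : {ffun 'I_n -> 'I_N} -> R) : R :=
  (\big[Rplus/0]_(g in G) f g) / INR #|G|.

Definition Rgeb (x y : R) : bool := if Rle_dec y x then true else false.

(* the non-increasing rearrangement of the nN numbers |a_ij|, as a list;
   s(k) (1-based, as in the paper) is  nth 0 (srearr a) (k-1). *)
Definition srearr (n N : nat) (a : 'I_n -> 'I_N -> R) : seq R :=
  sort Rgeb [seq Rabs (a i j) | i <- enum 'I_n, j <- enum 'I_N].

Definition s_at (n N : nat) (a : 'I_n -> 'I_N -> R) (k : nat) : R :=
  nth 0 (srearr a) k.  (* 0-based: s_at a k = s(k+1) *)

Definition bound_expr (n N : nat) (a : 'I_n -> 'I_N -> R) (p : R) : R :=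
  (\big[Rplus/0]_(0 <= k < N) s_at a k) / INR N
  + rpow ((\big[Rplus/0]_(N <= k < n * N) rpow (s_at a k) p) / INR N) (/ p).

(* Write the sum over [i] as a sum over the cells [e = (i, j)] weighted by the
   indicator of [g i = j]; by (i) and (ii) these indicators have mean [1/N] and
   pairwise correlations at most [C_G/N^2], which controls first and second
   moments of such sums.  Let [L] be the [N] cells with the largest [|a_e|].
   Upper bound: on the graph of [g], the l^p norm is at most the l^1 norm of the
   part in [L] plus the l^p norm of the rest; average, using Jensen for the
   concave [t |-> t^(1/p)].  Lower bound: the norm dominates [|a_e|] at every hit
   cell, and a second-moment estimate on the number of hits in [L] recovers the
   head average.  The tail term is either at most the head average, or its p-th
   power exceeds the p-th power of the head average, which dominates every tail
   entry; then a Paley-Zygmund type second-moment bound applies to the tail. *)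

From HB Require Import structures.
From mathcomp Require Import all_boot zify.
From Stdlib Require Import Reals Lra Psatz.

Set Implicit Arguments.
Unset Strict Implicit.
Unset Printing Implicit Defensive.

Local Open Scope R_scope.

Lemma Rdiv_ge0 x y : 0 <= x -> 0 < y -> 0 <= x / y.
Proof. by move=> x_ge0 y_gt0; apply: Rmult_le_pos => //; left; apply: Rinv_0_lt_compat. Qed.

Lemma Rinv_le1_pos p : 1 <= p -> 0 < / p <= 1.
Proof.
move=> p_ge1; split; first by apply: Rinv_0_lt_compat; lra.
by rewrite -Rinv_1; apply: Rinv_le_contravar; lra.
Qed.

Lemma exp_le_compat x y : x <= y -> exp x <= exp y.
Proof. by case=> [/exp_increasing|->]; lra. Qed.

Lemma ln_le_compat x y : 0 < x -> x <= y -> ln x <= ln y.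
Proof. by move=> x_gt0 [/(ln_increasing _ _ x_gt0)|->]; lra. Qed.

Lemma rpow_ge0 x q : 0 <= rpow x q.
Proof. rewrite /rpow; case: Rle_dec => ? /=; [lra | left; apply: exp_pos]. Qed.

Lemma rpow0 q : rpow 0 q = 0.
Proof. by rewrite /rpow; case: Rle_dec => //= ?; lra. Qed.

Lemma rpowE x q : 0 < x -> rpow x q = Rpower x q.
Proof. by rewrite /rpow; case: Rle_dec => //= ?; lra. Qed.

Lemma rpowK x p : 0 <= x -> 0 < p -> rpow (rpow x p) (/ p) = x.
Proof.
case=> [x_gt0|<-] p_gt0; last by rewrite !rpow0.
rewrite (rpowE p x_gt0) rpowE ?Rpower_mult ?Rinv_r ?Rpower_1 //; [lra | exact: exp_pos].
Qed.

Lemma rpowMl x y q : 0 <= x -> 0 <= y -> rpow (x * y) q = rpow x q * rpow y q.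
Proof.
case=> [x_gt0|<-]; last by rewrite Rmult_0_l !rpow0 Rmult_0_l.
case=> [y_gt0|<-]; last by rewrite Rmult_0_r !rpow0 Rmult_0_r.
by rewrite !rpowE ?Rpower_mult_distr //; apply: Rmult_lt_0_compat.
Qed.

Lemma rpow_le_compat x y q : 0 <= q -> 0 <= x <= y -> rpow x q <= rpow y q.
Proof.
move=> q_ge0 [[x_gt0|<-] le_xy]; last by rewrite rpow0; apply: rpow_ge0.
by rewrite !rpowE; [apply: Rle_Rpower_l | lra | lra].
Qed.

Lemma rpow_ge_min x q : 0 < q <= 1 -> 0 <= x -> Rmin x 1 <= rpow x q.
Proof.
move=> q_bnd [x_gt0|<-]; last by rewrite rpow0 Rmin_left; lra.
rewrite rpowE //; case: (Rle_dec x 1) => [le_x1|lt_1x].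
- rewrite Rmin_left // -{1}(exp_ln x) //; apply: exp_le_compat.
  have : ln x <= 0 by rewrite -ln_1; apply: ln_le_compat.
  nra.
- rewrite Rmin_right; last lra.
  rewrite -(Rpower_O _ x_gt0); apply: Rle_Rpower; lra.
Qed.

Lemma rpow_ge_quad mu t q : 0 < q <= 1 -> 0 < mu -> 0 <= t ->
  rpow mu q * (t / mu - t * t / (4 * (mu * mu))) <= rpow t q.
Proof.
move=> q_bnd mu_gt0 t_ge0.
have s_ge0 : 0 <= t / mu by apply: Rdiv_ge0.
have -> : t = t / mu * mu by field; lra.
rewrite rpowMl; [|done|lra].
have := rpow_ge_min q_bnd s_ge0; have := rpow_ge0 mu q; have := rpow_ge0 (t / mu) q.
set s := t / mu; set r := rpow mu q => ? ? ?.
have -> : r * (s * mu / mu - s * mu * (s * mu) / (4 * (mu * mu))) = r * (s - s * s / 4)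
  by field; lra.
have : s - s * s / 4 <= Rmin s 1.
  by apply: Rmin_glb; have := Rle_0_sqr (s - 2); rewrite /Rsqr; nra.
nra.
Qed.

Lemma rpow_le_tangent s q : 0 < q <= 1 -> 0 <= s -> rpow s q <= 1 + q * (s - 1).
Proof.
move=> q_bnd [s_gt0|<-]; last by rewrite rpow0; nra.
rewrite rpowE //.
have Rpower1 : Rpower 1 q = 1 by rewrite /Rpower ln_1 Rmult_0_r exp_0.
have deriv c : 0 < c -> derivable_pt_lim (fun x => Rpower x q) c (q * Rpower c (q - 1)).
  by move=> c_gt0; apply: derivable_pt_lim_power.
case: (Rtotal_order s 1) => [lt_s1|[->|lt_1s]].
- have [c [mvt c_bnd]] := MVT_cor2 _ _ s 1 lt_s1 (fun c hc => deriv c ltac:(lra)).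
  rewrite /= Rpower1 in mvt.
  have : 1 <= Rpower c (q - 1).
    rewrite /Rpower -[X in X <= _]exp_0; apply: exp_le_compat.
    have : ln c <= 0 by rewrite -ln_1; apply: ln_le_compat; lra.
    nra.
  have : 0 <= q * (1 - s) by nra.
  nra.
- by rewrite Rpower1; lra.
- have [c [mvt c_bnd]] := MVT_cor2 _ _ 1 s lt_1s (fun c hc => deriv c ltac:(lra)).
  rewrite /= Rpower1 in mvt.
  have : Rpower c (q - 1) <= 1.
    rewrite /Rpower -[X in _ <= X]exp_0; apply: exp_le_compat.
    have : 0 <= ln c by rewrite -ln_1; apply: ln_le_compat; lra.
    nra.
  have : 0 <= q * (s - 1) by nra.
  nra.
Qed.

Lemma rpow_le_tangent_at m x q : 0 < q <= 1 -> 0 < m -> 0 <= x ->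
  rpow x q <= rpow m q * (1 + q * (x / m - 1)).
Proof.
move=> q_bnd m_gt0 x_ge0.
have s_ge0 : 0 <= x / m by apply: Rdiv_ge0.
have -> : x = x / m * m by field; lra.
rewrite rpowMl; [|done|lra].
rewrite [rpow (x / m) q * _]Rmult_comm.
have -> : x / m * m / m = x / m by field; lra.
by apply: Rmult_le_compat_l; [apply: rpow_ge0 | apply: rpow_le_tangent].
Qed.

Lemma rpow_ge_id x q : 0 < q <= 1 -> 0 <= x <= 1 -> x <= rpow x q.
Proof. by move=> q_bnd [x_ge0 le_x1]; rewrite -{1}(Rmin_left x 1) //; apply: rpow_ge_min. Qed.

Lemma rpow_plus_le x y q : 0 < q <= 1 -> 0 <= x -> 0 <= y ->
  rpow (x + y) q <= rpow x q + rpow y q.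
Proof.
move=> q_bnd x_ge0 y_ge0.
case: (Req_dec (x + y) 0) => [xy0|xy_neq0].
  have [-> ->] : x = 0 /\ y = 0 by lra.
  by rewrite Rplus_0_l rpow0; lra.
have xy_gt0 : 0 < x + y by lra.
have frac z : 0 <= z -> rpow z q = rpow (z / (x + y)) q * rpow (x + y) q.
  by move=> z_ge0; rewrite -rpowMl; [congr rpow; field | apply: Rdiv_ge0 | ]; lra.
rewrite (frac x x_ge0) (frac y y_ge0).
have sx_ge0 := Rdiv_ge0 x_ge0 xy_gt0; have sy_ge0 := Rdiv_ge0 y_ge0 xy_gt0.
have sum1 : x / (x + y) + y / (x + y) = 1 by field.
set sx := x / (x + y) in sx_ge0 sum1 *; set sy := y / (x + y) in sy_ge0 sum1 *.
rewrite -Rmult_plus_distr_r -{1}(Rmult_1_l (rpow (x + y) q)) -sum1.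
apply: Rmult_le_compat_r; first exact: rpow_ge0.
by apply: Rplus_le_compat; apply: rpow_ge_id; lra.
Qed.

HB.instance Definition _ := Monoid.isComLaw.Build R 0 Rplus
  (fun x y z => esym (Rplus_assoc x y z)) Rplus_comm Rplus_0_l.
HB.instance Definition _ := Monoid.isMulLaw.Build R 0 Rmult Rmult_0_l Rmult_0_r.
HB.instance Definition _ :=
  Monoid.isAddLaw.Build R Rmult Rplus Rmult_plus_distr_r Rmult_plus_distr_l.

Section RealSums.
Variable I : Type.
Implicit Types (r : seq I) (P : pred I) (F H : I -> R).

Lemma sumR_le r P F H : (forall i, P i -> F i <= H i) ->
  \big[Rplus/0]_(i <- r | P i) F i <= \big[Rplus/0]_(i <- r | P i) H i.
Proof. by move=> le_FH; apply: (big_ind2 Rle) => // *; lra. Qed.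

Lemma sumR_ge0 r P F : (forall i, P i -> 0 <= F i) ->
  0 <= \big[Rplus/0]_(i <- r | P i) F i.
Proof. by move=> F_ge0; apply: (big_ind (Rle 0)) => // *; lra. Qed.

End RealSums.

Lemma sumR_const (T : finType) (A : {pred T}) c : \big[Rplus/0]_(i in A) c = INR #|A| * c.
Proof.
rewrite big_const; elim: #|A| => [|k IHk]; first by rewrite /=; lra.
by rewrite S_INR /= IHk; lra.
Qed.

Lemma sumR_ge_term (T : finType) (P : pred T) (F : T -> R) j :
  (forall i, P i -> 0 <= F i) -> P j -> F j <= \big[Rplus/0]_(i | P i) F i.
Proof.
move=> F_ge0 Pj; rewrite (bigD1 j) //=.
have : 0 <= \big[Rplus/0]_(i | P i && (i != j)) F i.
  by apply: sumR_ge0 => i /andP[/F_ge0].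
lra.
Qed.

Lemma rpow_sum_le (T : finType) (A : {pred T}) (F : T -> R) q :
  0 < q <= 1 -> (forall i, 0 <= F i) ->
  rpow (\big[Rplus/0]_(i in A) F i) q <= \big[Rplus/0]_(i in A) rpow (F i) q.
Proof.
move=> q_bnd F_ge0.
suff [] : 0 <= \big[Rplus/0]_(i in A) F i /\
          rpow (\big[Rplus/0]_(i in A) F i) q <= \big[Rplus/0]_(i in A) rpow (F i) q by [].
apply: (big_ind2 (fun x y => 0 <= x /\ rpow x q <= y)).
- by rewrite rpow0; lra.
- move=> x1 x2 y1 y2 [x1_ge0 le1] [x2_ge0 le2]; split; first lra.
  by apply: Rle_trans (rpow_plus_le q_bnd x1_ge0 x2_ge0) _; lra.
- by move=> i _; split; [apply: F_ge0 | lra].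
Qed.

(* Jensen for the concave [t |-> t^q], via its tangent at the mean. *)
Lemma sum_rpow_le_mean (T : finType) (A : {set T}) (X : T -> R) q :
  0 < q <= 1 -> 0 < INR #|A| -> (forall t, t \in A -> 0 <= X t) ->
  \big[Rplus/0]_(t in A) rpow (X t) q
    <= INR #|A| * rpow ((\big[Rplus/0]_(t in A) X t) / INR #|A|) q.
Proof.
move=> q_bnd A_gt0 X_ge0.
set m := _ / _.
have sumX : \big[Rplus/0]_(t in A) X t = INR #|A| * m by rewrite /m; field; lra.
have [m_gt0|m0] : 0 < m \/ 0 = m.
  by apply: Rle_lt_or_eq; apply: Rdiv_ge0 => //; apply: sumR_ge0.
- apply: (Rle_trans _ (\big[Rplus/0]_(t in A) (rpow m q * (1 + q * (X t / m - 1))))).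
    by apply: sumR_le => t tA; apply: rpow_le_tangent_at => //; apply: X_ge0.
  rewrite -big_distrr /= big_split /= sumR_const -big_distrr /= big_split /= sumR_const.
  rewrite -(big_distrl (/ m)) /= sumX; right; field; lra.
- rewrite -m0 rpow0 Rmult_0_r; right.
  rewrite big1 // => t tA.
  have : X t <= 0.
    rewrite -m0 Rmult_0_r in sumX; rewrite -sumX.
    exact: (sumR_ge_term (P := mem A)).
  move=> le_X0; have -> : X t = 0 by have := X_ge0 t tA; lra.
  exact: rpow0.
Qed.

Definition hit n N (g : {ffun 'I_n -> 'I_N}) (e : 'I_n * 'I_N) : bool := g e.1 == e.2.

Definition ind (b : bool) : R := if b then 1 else 0.

Lemma ind_ge0 b : 0 <= ind b.
Proof. by rewrite /ind; case: b; lra. Qed.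

Lemma ind_andb b1 b2 : ind (b1 && b2) = ind b1 * ind b2.
Proof. by rewrite /ind; case: b1; case: b2 => /=; lra. Qed.

Lemma sum_ind_card (T : finType) (A : {pred T}) (b : pred T) c :
  \big[Rplus/0]_(t in A) (c * ind (b t)) = c * INR #|[set t in A | b t]|.
Proof.
rewrite -big_distrr /=; congr (_ * _).
transitivity (\big[Rplus/0]_(t in A | b t) 1).
  by rewrite big_mkcondr; apply: eq_bigr => t _; rewrite /ind; case: (b t).
by rewrite sumR_const Rmult_1_r; congr INR; apply: eq_card => t; rewrite inE.
Qed.

Lemma sum_ord_hit n N (F : 'I_n -> 'I_N -> R) (g : {ffun 'I_n -> 'I_N}) :
  \big[Rplus/0]_(i < n) F i (g i) = \big[Rplus/0]_(e : 'I_n * 'I_N) (F e.1 e.2 * ind (hit g e)).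
Proof.
rewrite -(pair_big xpredT xpredT (fun i j => F i j * ind (hit g (i, j)))) /=.
apply: eq_bigr => i _; rewrite (bigD1 (g i)) //= big1 /hit /= ?eqxx.
  by rewrite /ind /=; lra.
by move=> j /negbTE; rewrite eq_sym /ind => ->; lra.
Qed.

Lemma rpowM_ind x b q : 0 <= x -> rpow (x * ind b) q = rpow x q * ind b.
Proof. by move=> x_ge0; rewrite /ind; case: b; rewrite ?Rmult_1_r ?Rmult_0_r ?rpow0. Qed.

(* [Y <= M Z] gives [Y (2c - Z) <= M Z (2c - Z) <= c^2 M]. *)
Lemma head_pointwise Y Z M c : 0 < c -> 0 <= Y -> 0 <= M -> Y <= M * Z ->
  2 / c * Y + - / (c * c) * (Y * Z) <= M.
Proof.
move=> c_gt0 Y_ge0 M_ge0 le_YMZ.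
have key : Y * (2 * c - Z) <= c * c * M.
  case: (Rle_dec Z (2 * c)) => [le_Z2c|]; last nra.
  have : Y * (2 * c - Z) <= M * Z * (2 * c - Z) by apply: Rmult_le_compat_r; lra.
  have : 0 <= M * ((c - Z) * (c - Z)) by apply: Rmult_le_pos => //; apply: Rle_0_sqr.
  nra.
have -> : 2 / c * Y + - / (c * c) * (Y * Z) = / (c * c) * (Y * (2 * c - Z)) by field; lra.
have -> : M = / (c * c) * (c * c * M) by field; lra.
by apply: Rmult_le_compat_l => //; left; apply: Rinv_0_lt_compat; nra.
Qed.

Definition graph_norm n N (v : 'I_n * 'I_N -> R) p (g : {ffun 'I_n -> 'I_N}) : R :=
  rpow (\big[Rplus/0]_e (rpow (v e) p * ind (hit g e))) (/ p).

Lemma graph_norm_ge_hit n N (v : 'I_n * 'I_N -> R) p g e :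
  1 <= p -> (forall e, 0 <= v e) -> hit g e -> v e <= graph_norm v p g.
Proof.
move=> p_ge1 v_ge0 hit_e.
rewrite /graph_norm -{1}(rpowK (v_ge0 e) (_ : 0 < p)); last lra.
apply: rpow_le_compat; first by left; apply: Rinv_0_lt_compat; lra.
split; first exact: rpow_ge0.
have -> : rpow (v e) p = rpow (v e) p * ind (hit g e) by rewrite hit_e /ind Rmult_1_r.
apply: (sumR_ge_term (P := fun _ => true) (F := fun e => rpow (v e) p * ind (hit g e))) => // e' _.
by apply: Rmult_le_pos; [apply: rpow_ge0 | apply: ind_ge0].
Qed.

Lemma graph_norm_ge_part n N (v : 'I_n * 'I_N -> R) p g (A : {pred 'I_n * 'I_N}) :
  1 <= p -> rpow (\big[Rplus/0]_(e in A) (rpow (v e) p * ind (hit g e))) (/ p) <= graph_norm v p g.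
Proof.
move=> p_ge1; apply: rpow_le_compat; first by left; apply: Rinv_0_lt_compat; lra.
have w_ge0 e : 0 <= rpow (v e) p * ind (hit g e).
  by apply: Rmult_le_pos; [apply: rpow_ge0 | apply: ind_ge0].
split; first by apply: sumR_ge0.
rewrite [X in _ <= X](bigID (mem A)) /= -[X in X <= _]Rplus_0_r.
by apply: Rplus_le_compat; [apply: Rle_refl | apply: sumR_ge0].
Qed.

Section GraphSums.
Variables (n N : nat) (G : {set {ffun 'I_n -> 'I_N}}) (CG : R).
Local Notation T := ('I_n * 'I_N)%type.
Local Notation K := (INR #|G|).
Local Notation NR := (INR N).
Hypothesis G_gt0 : 0 < K.
Hypothesis N_gt0 : 0 < NR.
Hypothesis CG_gt0 : 0 < CG.
Hypothesis card_hit : forall e : T, INR #|[set g in G | hit g e]| = K / NR.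
(* Hypothesis (ii), merged with the diagonal case [e = e'] that follows from (i). *)
Hypothesis card_hit2 : forall e e' : T,
  INR #|[set g in G | hit g e && hit g e']| <= K * (ind (e' == e) / NR + CG / (NR * NR)).

Lemma first_moment (A : {pred T}) (F : T -> R) :
  \big[Rplus/0]_(g in G) \big[Rplus/0]_(e in A) (F e * ind (hit g e))
    = K / NR * \big[Rplus/0]_(e in A) F e.
Proof.
rewrite exchange_big big_distrr /=; apply: eq_bigr => e _.
by rewrite sum_ind_card card_hit Rmult_comm.
Qed.

Lemma second_moment (A B : {pred T}) (F H : T -> R) :
  (forall e, 0 <= F e) -> (forall e, 0 <= H e) ->
  \big[Rplus/0]_(g in G) ((\big[Rplus/0]_(e in A) (F e * ind (hit g e))) *
                          (\big[Rplus/0]_(e in B) (H e * ind (hit g e))))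
  <= K * \big[Rplus/0]_(e in A)
           (F e * (H e / NR + CG / (NR * NR) * \big[Rplus/0]_(e' in B) H e')).
Proof.
move=> F_ge0 H_ge0.
under eq_bigr => g _ do rewrite big_distrlr /=.
rewrite exchange_big big_distrr /=; apply: sumR_le => e _.
rewrite exchange_big /=.
have pair_count e' : \big[Rplus/0]_(g in G) (F e * ind (hit g e) * (H e' * ind (hit g e')))
    = F e * H e' * INR #|[set g in G | hit g e && hit g e']|.
  by rewrite -sum_ind_card; apply: eq_bigr => g _; rewrite ind_andb; lra.
under eq_bigr => e' _ do rewrite pair_count.
apply: (Rle_trans _
  (\big[Rplus/0]_(e' in B) (F e * H e' * (K * (ind (e' == e) / NR + CG / (NR * NR)))))).
  by apply: sumR_le => e' _; apply: Rmult_le_compat_l; [apply: Rmult_le_pos | apply: card_hit2].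
have diag : \big[Rplus/0]_(e' in B) (H e' * ind (e' == e)) <= H e.
  rewrite (big_mkcond (mem B)); rewrite (bigD1 e) //= big1 => [|e' /negbTE ne]; last first.
    by rewrite ne /ind; case: (_ \in _); lra.
  by rewrite /ind eqxx; case: (_ \in _); have := H_ge0 e; lra.
have -> : \big[Rplus/0]_(e' in B) (F e * H e' * (K * (ind (e' == e) / NR + CG / (NR * NR))))
    = K * F e * (/ NR * \big[Rplus/0]_(e' in B) (H e' * ind (e' == e))
                 + CG / (NR * NR) * \big[Rplus/0]_(e' in B) H e').
  by rewrite !big_distrr -big_split big_distrr /=; apply: eq_bigr => e' _; field; lra.
have -> : F e * (H e / NR + CG / (NR * NR) * \big[Rplus/0]_(e' in B) H e')
    = F e * (/ NR * H e + CG / (NR * NR) * \big[Rplus/0]_(e' in B) H e') by rewrite /Rdiv [H e * _]Rmult_comm.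
rewrite Rmult_assoc; apply: Rmult_le_compat_l; first lra.
apply: Rmult_le_compat_l; first exact: F_ge0.
by apply: Rplus_le_compat_r; apply: Rmult_le_compat_l => //; left; apply: Rinv_0_lt_compat.
Qed.

Lemma head_lower_bound (L : {set T}) (v : T -> R) (M : {ffun 'I_n -> 'I_N} -> R) :
  (forall e, 0 <= v e) -> INR #|L| <= NR -> (forall g, g \in G -> 0 <= M g) ->
  (forall g e, g \in G -> e \in L -> hit g e -> v e <= M g) ->
  K / (NR * (1 + CG)) * \big[Rplus/0]_(e in L) v e <= \big[Rplus/0]_(g in G) M g.
Proof.
move=> v_ge0 L_le M_ge0 M_ge_v.
set c := 1 + CG; have c_gt0 : 0 < c by rewrite /c; lra.
set S := \big[Rplus/0]_(e in L) v e.
have S_ge0 : 0 <= S by apply: sumR_ge0.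
pose Y g := \big[Rplus/0]_(e in L) (v e * ind (hit g e)).
pose Z g := \big[Rplus/0]_(e in L) ((fun=> 1) e * ind (hit g e)).
apply: (Rle_trans _ (\big[Rplus/0]_(g in G) (2 / c * Y g + - / (c * c) * (Y g * Z g)))); last first.
  apply: sumR_le => g gG; apply: head_pointwise.
  - exact: c_gt0.
  - by apply: sumR_ge0 => e _; apply: Rmult_le_pos => //; apply: ind_ge0.
  - exact: M_ge0.
  rewrite /Z big_distrr /=; apply: sumR_le => e eL; rewrite /ind.
  by case hit_e: (hit g e); [have := M_ge_v g e gG eL hit_e | have := M_ge0 g gG]; lra.
have sumYZ : \big[Rplus/0]_(g in G) (Y g * Z g) <= K * S * (c / NR).
  apply: Rle_trans (second_moment L L v_ge0 (fun=> Rle_0_1)) _.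
  rewrite Rmult_assoc /S big_distrl; apply: Rmult_le_compat_l; first lra.
  apply: sumR_le => e _; apply: Rmult_le_compat_l => //.
  rewrite sumR_const Rmult_1_r.
  have : CG / (NR * NR) * INR #|L| <= CG / NR.
    have -> : CG / NR = CG / (NR * NR) * NR by field; lra.
    by apply: Rmult_le_compat_l => //; apply: Rdiv_ge0; nra.
  have -> : c / NR = 1 / NR + CG / NR by rewrite /c; field; lra.
  exact: Rplus_le_compat_l.
rewrite big_split /= -!big_distrr /= first_moment -/S.
have -> : K / (NR * c) * S = 2 / c * (K / NR * S) + - / (c * c) * (K * S * (c / NR)) by field; lra.
apply: Rplus_le_compat_l; rewrite -!Ropp_mult_distr_l; apply: Ropp_le_contravar.
by apply: Rmult_le_compat_l => //; left; apply: Rinv_0_lt_compat; nra.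
Qed.

Lemma second_moment_le_sqr_mean (A : {set T}) (w : T -> R) :
  (forall e, 0 <= w e) ->
  (forall e, e \in A -> w e <= (\big[Rplus/0]_(e in A) w e) / NR) ->
  \big[Rplus/0]_(g in G) ((\big[Rplus/0]_(e in A) (w e * ind (hit g e))) *
                          (\big[Rplus/0]_(e in A) (w e * ind (hit g e))))
  <= K * ((1 + CG) * ((\big[Rplus/0]_(e in A) w e) / NR * ((\big[Rplus/0]_(e in A) w e) / NR))).
Proof.
move=> w_ge0 w_le.
set W := \big[Rplus/0]_(e in A) w e in w_le *; set m := W / NR in w_le *.
apply: Rle_trans (second_moment A A w_ge0 w_ge0) _; apply: Rmult_le_compat_l; first lra.
apply: (Rle_trans _ (\big[Rplus/0]_(e in A) (w e * ((1 + CG) * m / NR)))).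
  apply: sumR_le => e eA; apply: Rmult_le_compat_l => //.
  have -> : CG / (NR * NR) * W = CG * m / NR by rewrite /m; field; lra.
  have -> : (1 + CG) * m / NR = m / NR + CG * m / NR by field; lra.
  apply: Rplus_le_compat_r; rewrite /Rdiv; apply: Rmult_le_compat_r; last exact: w_le.
  by left; apply: Rinv_0_lt_compat.
by rewrite -big_distrl /= -/W; right; rewrite /m; field; lra.
Qed.

(* A second-moment (Paley-Zygmund type) argument, through [t^q >= t - t^2/4]. *)
Lemma tail_lower_bound (A : {set T}) (w : T -> R) q :
  0 < q <= 1 -> (forall e, 0 <= w e) ->
  (forall e, e \in A -> w e <= (\big[Rplus/0]_(e in A) w e) / NR) ->
  K / (2 * (1 + CG)) * rpow ((\big[Rplus/0]_(e in A) w e) / NR) q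
    <= \big[Rplus/0]_(g in G) rpow (\big[Rplus/0]_(e in A) (w e * ind (hit g e))) q.
Proof.
move=> q_bnd w_ge0 w_le.
set W := \big[Rplus/0]_(e in A) w e in w_le *; set m := W / NR in w_le *.
set c := 1 + CG; have c_gt0 : 0 < c by rewrite /c; lra.
pose X g := \big[Rplus/0]_(e in A) (w e * ind (hit g e)).
have X_ge0 g : 0 <= X g by apply: sumR_ge0 => e _; apply: Rmult_le_pos => //; apply: ind_ge0.
have W_ge0 : 0 <= W by apply: sumR_ge0.
have [m_gt0|m0] : 0 <= m by apply: Rdiv_ge0.
  2: by rewrite -m0 rpow0 Rmult_0_r; apply: sumR_ge0 => g _; apply: rpow_ge0.
set mu := c / 2 * m; have mu_gt0 : 0 < mu by rewrite /mu; nra.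
have sumX : \big[Rplus/0]_(g in G) X g = K * m by rewrite /X first_moment -/W /m; field; lra.
have sumX2 : \big[Rplus/0]_(g in G) (X g * X g) <= K * (c * (m * m))
  by apply: second_moment_le_sqr_mean.
set P := \big[Rplus/0]_(g in G) (X g * X g) in sumX2.
have quad_sum : rpow mu q * (K / c)
    <= \big[Rplus/0]_(g in G) (rpow mu q * (X g / mu - X g * X g / (4 * (mu * mu)))).
  rewrite -big_distrr; apply: Rmult_le_compat_l; first exact: rpow_ge0.
  rewrite (eq_bigr (fun g => / mu * X g + - / (4 * (mu * mu)) * (X g * X g))); last first.
    by move=> g _; field; lra.
  rewrite big_split -!big_distrr /= sumX -/P.
  have : / (4 * (mu * mu)) * P <= / (4 * (mu * mu)) * (K * (c * (m * m))).
    by apply: Rmult_le_compat_l => //; left; apply: Rinv_0_lt_compat; nra.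
  have -> : K / c = / mu * (K * m) - / (4 * (mu * mu)) * (K * (c * (m * m))).
    by rewrite /mu; field; lra.
  lra.
have quad_le : \big[Rplus/0]_(g in G) (rpow mu q * (X g / mu - X g * X g / (4 * (mu * mu))))
    <= \big[Rplus/0]_(g in G) rpow (X g) q by apply: sumR_le => g _; apply: rpow_ge_quad.
apply: (Rle_trans _ _ _ _ (Rle_trans _ _ _ quad_sum quad_le)).
rewrite /mu rpowMl; [|lra|lra].
have : 1 / 2 <= rpow (c / 2) q.
  apply: Rle_trans (rpow_ge_min q_bnd (_ : 0 <= c / 2)); last lra.
  by apply: Rmin_glb; rewrite /c; lra.
have := rpow_ge0 m q; have : 0 <= K / c by apply: Rdiv_ge0; lra.
move=> ? ? ?.
have -> : K / (2 * c) * rpow m q = 1 / 2 * (rpow m q * (K / c)) by field; lra.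
rewrite Rmult_assoc; apply: Rmult_le_compat_r => //; exact: Rmult_le_pos.
Qed.

Lemma mean_graph_norm_le (L : {set T}) (v : T -> R) p :
  1 <= p -> (forall e, 0 <= v e) ->
  (\big[Rplus/0]_(g in G) graph_norm v p g) / K
    <= (\big[Rplus/0]_(e in L) v e) / NR
       + rpow ((\big[Rplus/0]_(e in ~: L) rpow (v e) p) / NR) (/ p).
Proof.
move=> p_ge1 v_ge0; have q_bnd := Rinv_le1_pos p_ge1.
apply: (Rmult_le_reg_l K) => //.
rewrite [K * (_ / K)]Rmult_comm /Rdiv Rmult_assoc Rinv_l ?Rmult_1_r; last lra.
have w_ge0 g e : 0 <= rpow (v e) p * ind (hit g e).
  by apply: Rmult_le_pos; [apply: rpow_ge0 | apply: ind_ge0].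
pose tail g := \big[Rplus/0]_(e in ~: L) (rpow (v e) p * ind (hit g e)).
have split_norm g :
    graph_norm v p g <= \big[Rplus/0]_(e in L) (v e * ind (hit g e)) + rpow (tail g) (/ p).
  rewrite /graph_norm (bigID (mem L)) /=.
  apply: Rle_trans (rpow_plus_le q_bnd (sumR_ge0 _ _) (sumR_ge0 _ _)) _; try by move=> e _.
  apply: Rplus_le_compat.
    apply: Rle_trans (rpow_sum_le _ q_bnd (w_ge0 g)) _; right.
    by apply: eq_bigr => e _; rewrite rpowM_ind ?rpowK //; [lra | apply: rpow_ge0].
  by right; congr rpow; apply: eq_bigl => e; rewrite in_setC.
apply: (Rle_trans _ (\big[Rplus/0]_(g in G)
  (\big[Rplus/0]_(e in L) (v e * ind (hit g e)) + rpow (tail g) (/ p)))).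
  by apply: sumR_le => g _; apply: split_norm.
rewrite big_split /= first_moment Rmult_plus_distr_l.
apply: Rplus_le_compat; first by right; rewrite /Rdiv Rmult_assoc [/ NR * _]Rmult_comm.
apply: Rle_trans (sum_rpow_le_mean q_bnd G_gt0 _) _.
  by move=> g _; apply: sumR_ge0.
have cancel_K x : K / NR * x / K = x / NR by field; lra.
by right; rewrite /tail first_moment cancel_K.
Qed.

Lemma head_le_mean_graph_norm (L : {set T}) (v : T -> R) p :
  1 <= p -> (forall e, 0 <= v e) -> #|L| = N ->
  (\big[Rplus/0]_(e in L) v e) / NR
    <= (1 + CG) * ((\big[Rplus/0]_(g in G) graph_norm v p g) / K).
Proof.
move=> p_ge1 v_ge0 card_L.
have head : K / (NR * (1 + CG)) * \big[Rplus/0]_(e in L) v e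
    <= \big[Rplus/0]_(g in G) graph_norm v p g.
  apply: head_lower_bound => //; first by rewrite card_L; apply: Rle_refl.
    by move=> g _; apply: rpow_ge0.
  by move=> g e _ _; apply: graph_norm_ge_hit.
move: head; set S := \big[Rplus/0]_(e in L) v e; set sumN := \big[Rplus/0]_(g in G) _.
move=> head; apply: (Rmult_le_reg_l (K / (1 + CG))); first by apply: Rdiv_lt_0_compat; lra.
have -> : K / (1 + CG) * (S / NR) = K / (NR * (1 + CG)) * S by field; lra.
by have -> : K / (1 + CG) * ((1 + CG) * (sumN / K)) = sumN by field; lra.
Qed.

Lemma tail_le_mean_graph_norm (L : {set T}) (v : T -> R) p x :
  1 <= p -> (forall e, 0 <= v e) -> (forall e, e \notin L -> v e <= x) ->
  rpow x p <= (\big[Rplus/0]_(e in ~: L) rpow (v e) p) / NR ->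
  rpow ((\big[Rplus/0]_(e in ~: L) rpow (v e) p) / NR) (/ p)
    <= 2 * (1 + CG) * ((\big[Rplus/0]_(g in G) graph_norm v p g) / K).
Proof.
move=> p_ge1 v_ge0 tail_le_x le_xW.
have tail : K / (2 * (1 + CG)) * rpow ((\big[Rplus/0]_(e in ~: L) rpow (v e) p) / NR) (/ p)
    <= \big[Rplus/0]_(g in G) graph_norm v p g.
  apply: Rle_trans (tail_lower_bound (Rinv_le1_pos p_ge1) (fun e => rpow_ge0 _ _) _) _.
    move=> e; rewrite in_setC => e_tail; apply: Rle_trans le_xW.
    by apply: rpow_le_compat; [lra | split; [apply: v_ge0 | apply: tail_le_x]].
  by apply: sumR_le => g _; apply: graph_norm_ge_part.
move: tail; set y := rpow _ (/ p); set sumN := \big[Rplus/0]_(g in G) _.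
move=> tail; apply: (Rmult_le_reg_l (K / (2 * (1 + CG)))); first by apply: Rdiv_lt_0_compat; lra.
by have -> : K / (2 * (1 + CG)) * (2 * (1 + CG) * (sumN / K)) = sumN by field; lra.
Qed.

Lemma head_tail_le_mean_graph_norm (L : {set T}) (v : T -> R) p :
  1 <= p -> (forall e, 0 <= v e) -> #|L| = N ->
  (forall e e', e \in L -> e' \notin L -> v e' <= v e) ->
  (\big[Rplus/0]_(e in L) v e) / NR
    + rpow ((\big[Rplus/0]_(e in ~: L) rpow (v e) p) / NR) (/ p)
  <= 3 * (1 + CG) * ((\big[Rplus/0]_(g in G) graph_norm v p g) / K).
Proof.
move=> p_ge1 v_ge0 card_L v_dom.
set x := _ / NR; set y := rpow _ (/ p); set z := _ / K.
have z_ge0 : 0 <= z by apply: Rdiv_ge0 => //; apply: sumR_ge0 => g _; apply: rpow_ge0.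
have x_ge0 : 0 <= x by apply: Rdiv_ge0 => //; apply: sumR_ge0.
have le_x : x <= (1 + CG) * z by apply: head_le_mean_graph_norm.
have tail_le_x e' : e' \notin L -> v e' <= x.
  move=> e'L; apply: (Rmult_le_reg_l NR) => //.
  have -> : NR * x = \big[Rplus/0]_(e in L) v e by rewrite /x; field; lra.
  have -> : NR * v e' = \big[Rplus/0]_(e in L) v e' by rewrite sumR_const card_L Rmult_comm.
  by apply: sumR_le => e eL; apply: v_dom.
have [le_xW|lt_Wx] := Rle_dec (rpow x p) ((\big[Rplus/0]_(e in ~: L) rpow (v e) p) / NR).
  have : y <= 2 * (1 + CG) * z by apply: (tail_le_mean_graph_norm p_ge1 v_ge0 tail_le_x).
  lra.
have : y <= x.
  rewrite /y -(rpowK x_ge0 (_ : 0 < p)); last lra.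
  apply: rpow_le_compat; first by left; apply: Rinv_0_lt_compat; lra.
  by split; [apply: Rdiv_ge0 => //; apply: sumR_ge0 => e _; apply: rpow_ge0 | lra].
lra.
Qed.

End GraphSums.

Lemma Rgeb_total : total Rgeb.
Proof. by move=> x y; rewrite /Rgeb; do 2 case: Rle_dec => //=; lra. Qed.

Lemma Rgeb_trans : transitive Rgeb.
Proof. by move=> x y z; rewrite /Rgeb; do 3 case: Rle_dec => //=; lra. Qed.

Lemma RgebP x y : Rgeb x y -> y <= x.
Proof. by rewrite /Rgeb; case: Rle_dec. Qed.

Lemma sort_Rgeb_top_split (T : finType) (v : T -> R) (s : seq T) (k : nat) (e0 : T) :
  uniq s -> (forall e, e \in s) -> (k <= size s)%nat ->
  exists L : {set T},
  [/\ #|L| = k,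
      \big[Rplus/0]_(0 <= i < k) nth 0 (sort Rgeb (map v s)) i = \big[Rplus/0]_(e in L) v e,
      forall f : R -> R, \big[Rplus/0]_(k <= i < size s) f (nth 0 (sort Rgeb (map v s)) i)
                         = \big[Rplus/0]_(e in ~: L) f (v e) &
      forall e e', e \in L -> e' \notin L -> v e' <= v e].
Proof.
move=> uniq_s s_full le_k.
pose P := sort (relpre v Rgeb) s.
have -> : sort Rgeb (map v s) = map v P by rewrite sort_map.
have uniq_P : uniq P by rewrite sort_uniq.
have size_P : size P = size s by rewrite size_sort.
have P_full e : e \in P by rewrite mem_sort.
have P_split : P = take k P ++ drop k P by rewrite cat_take_drop.
have uniq_take := take_uniq k uniq_P; have uniq_drop := drop_uniq k uniq_P.
have notin_take e : (e \notin take k P) = (e \in drop k P).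
  move: uniq_P (P_full e); rewrite {1 2}P_split cat_uniq mem_cat => /and3P[_ /hasPn disj _].
  by case: (boolP (e \in drop k P)) => [/disj -> //|_]; rewrite orbF => ->.
exists [set e in take k P]; split.
- by rewrite cardsE (card_uniqP uniq_take) size_takel // size_P.
- rewrite (eq_bigl (mem (take k P))); last by move=> e; rewrite inE.
  rewrite -big_uniq // (big_nth e0) size_takel ?size_P //.
  apply: eq_big_nat => i /andP[_ lt_ik].
  by rewrite (nth_map e0) ?nth_take // size_P (leq_trans lt_ik).
- move=> f; rewrite (eq_bigl (mem (drop k P))); last by move=> e; rewrite !inE notin_take.
  rewrite -big_uniq // (big_nth e0) size_drop size_P -{1}(add0n k) big_addn.
  apply: eq_big_nat => i /andP[_ lt_i].
  rewrite (nth_map e0) ?nth_drop 1?addnC // size_P.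
  by move: lt_i; clear; lia.
- move=> e e'; rewrite !inE notin_take => e_take e'_drop.
  have : pairwise (relpre v Rgeb) P.
    rewrite -sorted_pairwise => [|x y z]; last exact: Rgeb_trans.
    by apply: sort_sorted => x y; apply: Rgeb_total.
  rewrite {1}P_split pairwise_cat => /and3P[/allrelP all_ge _ _].
  exact: RgebP (all_ge e e' e_take e'_drop).
Qed.

Lemma bound_expr_rearrange n N (a : 'I_n -> 'I_N -> R) p (e0 : 'I_n * 'I_N) :
  (N <= n * N)%nat ->
  exists L : {set 'I_n * 'I_N},
  [/\ #|L| = N,
      forall e e', e \in L -> e' \notin L -> Rabs (a e'.1 e'.2) <= Rabs (a e.1 e.2) &
      bound_expr a p = (\big[Rplus/0]_(e in L) Rabs (a e.1 e.2)) / INR N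
        + rpow ((\big[Rplus/0]_(e in ~: L) rpow (Rabs (a e.1 e.2)) p) / INR N) (/ p)].
Proof.
move=> le_N.
pose s := [seq (i, j) | i <- enum 'I_n, j <- enum 'I_N].
have srearrE : srearr a = sort Rgeb (map (fun e => Rabs (a e.1 e.2)) s).
  by rewrite /srearr /s map_allpairs.
have uniq_s : uniq s.
  by apply: allpairs_uniq; rewrite ?enum_uniq // => -[? ?] [? ?] _ _ [-> ->].
have s_full e : e \in s by case: e => i j; apply/allpairsP; exists (i, j); rewrite !mem_enum.
have size_s : size s = (n * N)%nat by rewrite size_allpairs !size_enum_ord.
have le_Ns : (N <= size s)%nat by rewrite size_s.
have [L [card_L head tail dom]] :=
  sort_Rgeb_top_split (fun e => Rabs (a e.1 e.2)) e0 uniq_s s_full le_Ns.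
exists L; split => //.
by rewrite /bound_expr /s_at srearrE head -size_s (tail (fun x => rpow x p)).
Qed.

Lemma bound_expr_dim0 N (a : 'I_0 -> 'I_N -> R) p : bound_expr a p = 0.
Proof.
rewrite /bound_expr /s_at /srearr.
have -> : [seq Rabs (a i j) | i <- enum 'I_0, j <- enum 'I_N] = [::].
  by apply/nilP; rewrite /nilp size_allpairs size_enum_ord.
rewrite big1 => [|k _]; last by rewrite nth_nil.
rewrite big1 => [|k _]; last by rewrite nth_nil rpow0.
by rewrite /Rdiv !Rmult_0_l rpow0; lra.
Qed.

Lemma Expect_graph_norm n N (G : {set {ffun 'I_n -> 'I_N}}) (a : 'I_n -> 'I_N -> R) p :
  Expect G (fun g => rpow (\big[Rplus/0]_(i < n) rpow (Rabs (a i (g i))) p) (/ p))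
  = (\big[Rplus/0]_(g in G) graph_norm (fun e => Rabs (a e.1 e.2)) p g) / INR #|G|.
Proof.
rewrite /Expect; congr (_ / _); apply: eq_bigr => g _.
by rewrite /graph_norm (sum_ord_hit (fun i j => rpow (Rabs (a i j)) p)).
Qed.

Lemma card_Prob n N (G : {set {ffun 'I_n -> 'I_N}}) (E : pred {ffun 'I_n -> 'I_N}) :
  0 < INR #|G| -> INR #|[set g in G | E g]| = INR #|G| * Prob G E.
Proof. by rewrite /Prob => G_gt0; field; lra. Qed.

Lemma card_hit2_le n N (G : {set {ffun 'I_n -> 'I_N}}) CG :
  0 < INR #|G| -> 0 < INR N -> 0 <= CG ->
  (forall i j, Prob G (fun g => g i == j) = 1 / INR N) ->
  (forall i1 i2 j1 j2, (i1, j1) <> (i2, j2) ->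
     Prob G (fun g => (g i1 == j1) && (g i2 == j2)) <= CG / INR N ^ 2) ->
  forall e e', INR #|[set g in G | hit g e && hit g e']|
                 <= INR #|G| * (ind (e' == e) / INR N + CG / (INR N * INR N)).
Proof.
move=> G_gt0 N_gt0 CG_ge0 prob_hit prob_hit2 [i1 j1] [i2 j2].
rewrite (card_Prob (fun g => hit g _ && hit g _)) //; apply: Rmult_le_compat_l; first lra.
have CG_N2 : 0 <= CG / (INR N * INR N) by apply: Rdiv_ge0; nra.
case: eqP => [[-> ->]|ne].
  have -> : Prob G (fun g => hit g (i1, j1) && hit g (i1, j1)) = Prob G (fun g => g i1 == j1).
    by rewrite /Prob; congr (INR _ / _); apply: eq_card => g; rewrite !inE /hit andbb.
  by rewrite prob_hit /ind; lra.
apply: Rle_trans (prob_hit2 i1 i2 j1 j2 (fun h => ne (esym h))) _.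
by right; rewrite /ind /=; field; lra.
Qed.

Theorem theorem1p2 :
  forall CG : R, 0 < CG ->
  exists C : R, 0 < C /\
  forall (n N : nat) (a : 'I_n -> 'I_N -> R) (p : R)
         (G : {set {ffun 'I_n -> 'I_N}}),
    1 <= p ->
    G != set0 ->
    (forall (i : 'I_n) (j : 'I_N),
        Prob G (fun g => g i == j) = 1 / INR N) ->
    (forall (i1 i2 : 'I_n) (j1 j2 : 'I_N), (i1, j1) <> (i2, j2) ->
        Prob G (fun g => (g i1 == j1) && (g i2 == j2)) <= CG / (INR N ^ 2)) ->
    C * bound_expr a p
      <= Expect G (fun g => rpow (\big[Rplus/0]_(i < n) rpow (Rabs (a i (g i))) p) (/ p))
    /\ Expect G (fun g => rpow (\big[Rplus/0]_(i < n) rpow (Rabs (a i (g i))) p) (/ p))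
      <= bound_expr a p.
Proof.
move=> CG CG_gt0; exists (/ (3 * (1 + CG))); split; first by apply: Rinv_0_lt_compat; lra.
move=> [|n] N a p G p_ge1 /set0Pn[g0 g0G] prob_hit prob_hit2.
  rewrite bound_expr_dim0 /Expect big1 => [|g _]; last by rewrite big_ord0 rpow0.
  by rewrite /Rdiv Rmult_0_l Rmult_0_r; lra.
have G_gt0 : 0 < INR #|G| by apply/lt_0_INR/ltP/card_gt0P; exists g0.
have N_gt0 : 0 < INR N by apply/lt_0_INR/ltP; apply: leq_ltn_trans (ltn_ord (g0 ord0)).
have [L [card_L dom_L ->]] := bound_expr_rearrange a p (ord0, g0 ord0) (leq_pmull N (ltn0Sn n)).
have card_hit e : INR #|[set g in G | hit g e]| = INR #|G| / INR N.
  by rewrite card_Prob // prob_hit; field; lra.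
have card_hit2 := card_hit2_le G_gt0 N_gt0 (Rlt_le _ _ CG_gt0) prob_hit prob_hit2.
rewrite Expect_graph_norm; split; last first.
  by apply: mean_graph_norm_le => // e; apply: Rabs_pos.
apply: (Rmult_le_reg_l (3 * (1 + CG))); first lra.
rewrite -Rmult_assoc Rinv_r ?Rmult_1_l; last lra.
by apply: head_tail_le_mean_graph_norm => // e; apply: Rabs_pos.
Qed.
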